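(* For every $n\ge1$, $$\mathbf{G}^{[n-1]}_{\mathrm{o}/\mathrm{e}}(\lambda;0,0)\cdots\mathbf{G}^{[0]}_{\mathrm{o}/\mathrm{e}}(\lambda;0,0)=\mathbf{G}^{[0]}_{\mathrm{o}/\mathrm{e}}(\lambda;0,0)^n,$$ where $\mathbf{G}^{[0]}_{\mathrm{o}}(\lambda;0,0)=\mathbb{I}+\frac{\mathbf{H}}{\lambda-\mathrm{i}}-\frac{\mathbf{K}}{\lambda+\mathrm{i}}$ and $\mathbf{G}^{[0]}_{\mathrm{e}}(\lambda;0,0)=\mathbb{I}+\frac{\mathbf{K}}{\lambda-\mathrm{i}}-\frac{\mathbf{H}}{\lambda+\mathrm{i}}$ with $\mathbf{H}=\mathrm{i}\begin{bmatrix}1&1\\1&1\end{bmatrix}$, $\mathbf{K}=\mathrm{i}\begin{bmatrix}1&-1\\-1&1\end{bmatrix}$. Explicitly, $$\mathbf{G}^{[0]}_{\mathrm{o}}(\lambda;0,0)^n=\mathbb{I}+\sum_{k=1}^n\binom nk(2\mathrm{i})^{k-1}\Big[\frac{\mathbf{H}}{(\lambda-\mathrm{i})^k}+\frac{(-1)^k\mathbf{K}}{(\lambda+\mathrm{i})^k}\Big],\quad \mathbf{G}^{[0]}_{\mathrm{e}}(\lambda;0,0)^n=\mathbb{I}+\sum_{k=1}^n\binom nk(2\mathrm{i})^{k-1}\Big[\frac{\mathbf{K}}{(\lambda-\mathrm{i})^k}+\frac{(-1)^k\mathbf{H}}{(\lambda+\mathrm{i})^k}\Big].$$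
   Context: $\sigma_2=\begin{bmatrix}0&-\mathrm{i}\\\mathrm{i}&0\end{bmatrix}$. Let $\mathbf{c}_{\infty,\mathrm{o}}=(1,-1)^\top$, $\mathbf{c}_{\infty,\mathrm{e}}=(1,1)^\top$. Recursively (for a fixed choice o or e): $\psi^{[0]}\equiv1$; given the global classical NLS solution $\psi^{[n]}$ (of $\mathrm{i}\psi_t+\frac12\psi_{xx}+(|\psi|^2-1)\psi=0$), $\mathbf{U}^{[n]}(\lambda;x,t)$ is the unique simultaneous fundamental solution of $\mathbf{U}_x=\begin{bmatrix}-\mathrm{i}\lambda&\psi^{[n]}\\-\psi^{[n]*}&\mathrm{i}\lambda\end{bmatrix}\mathbf{U}$, $\mathbf{U}_t=\begin{bmatrix}-\mathrm{i}\lambda^2+\frac{\mathrm{i}}2(|\psi^{[n]}|^2-1)&\lambda\psi^{[n]}+\frac{\mathrm{i}}2\psi^{[n]}_x\\-\lambda\psi^{[n]*}+\frac{\mathrm{i}}2\psi^{[n]*}_x&\mathrm{i}\lambda^2-\frac{\mathrm{i}}2(|\psi^{[n]}|^2-1)\end{bmatrix}\mathbf{U}$ with $\mathbf{U}^{[n]}(\lambda;0,0)=\mathbb{I}$; $\mathbf{s}=\mathbf{U}^{[n]}(\mathrm{i};x,t)\mathbf{c}_\infty$, $\mathbf{s}'=\partial_\lambda\mathbf{U}^{[n]}(\mathrm{i};x,t)\mathbf{c}_\infty$, $N=\mathbf{s}^\dagger\mathbf{s}$, $w=\mathbf{s}^\top\sigma_2\mathbf{s}'$, $\mathbf{Y}^{[n]}_\infty=[-4w^*\mathbf{s}\mathbf{s}^\top\sigma_2+2\mathrm{i}N\sigma_2\mathbf{s}^*\mathbf{s}^\top\sigma_2]/(4|w|^2+N^2)$,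 $\mathbf{Z}^{[n]}_\infty=\sigma_2(\mathbf{Y}^{[n]}_\infty)^*\sigma_2$, $\mathbf{G}^{[n]}(\lambda;x,t)=\mathbb{I}+\mathbf{Y}^{[n]}_\infty/(\lambda-\mathrm{i})+\mathbf{Z}^{[n]}_\infty/(\lambda+\mathrm{i})$, and $\psi^{[n+1]}=\psi^{[n]}+2\mathrm{i}(Y^{[n]}_{\infty,12}-(Y^{[n]}_{\infty,21})^* )$. Subscripts o/e indicate $\mathbf{c}_\infty=\mathbf{c}_{\infty,\mathrm{o}}$ or $\mathbf{c}_{\infty,\mathrm{e}}$. *)

From Stdlib Require Import Reals.
Open Scope R_scope.

Record Cx := mkCx { Re : R; Im : R }.
Definition Czero : Cx := mkCx 0 0.
Definition Cone : Cx := mkCx 1 0.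
Definition Ci : Cx := mkCx 0 1.
Definition RtoC (r : R) : Cx := mkCx r 0.
Definition Cadd (z w : Cx) : Cx := mkCx (Re z + Re w) (Im z + Im w).
Definition Cneg (z : Cx) : Cx := mkCx (- Re z) (- Im z).
Definition Csub (z w : Cx) : Cx := Cadd z (Cneg w).
Definition Cmul (z w : Cx) : Cx :=
  mkCx (Re z * Re w - Im z * Im w) (Re z * Im w + Im z * Re w).
Definition Cconj (z : Cx) : Cx := mkCx (Re z) (- Im z).
Definition Cnorm2 (z : Cx) : R := Re z * Re z + Im z * Im z.
Definition Cmod (z : Cx) : R := sqrt (Cnorm2 z).
Definition Cinv (z : Cx) : Cx :=
  mkCx (Re z / Cnorm2 z) (- Im z / Cnorm2 z).
Definition Cdiv (z w : Cx) : Cx := Cmul z (Cinv w).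
Fixpoint Cpow (z : Cx) (n : nat) : Cx :=
  match n with O => Cone | S m => Cmul z (Cpow z m) end.

Record M2 := mkM2 { e11 : Cx; e12 : Cx; e21 : Cx; e22 : Cx }.
Record V2 := mkV2 { v1 : Cx; v2 : Cx }.

Definition Mid : M2 := mkM2 Cone Czero Czero Cone.
Definition Madd (A B : M2) : M2 :=
  mkM2 (Cadd (e11 A) (e11 B)) (Cadd (e12 A) (e12 B))
       (Cadd (e21 A) (e21 B)) (Cadd (e22 A) (e22 B)).
Definition Mscale (c : Cx) (A : M2) : M2 :=
  mkM2 (Cmul c (e11 A)) (Cmul c (e12 A)) (Cmul c (e21 A)) (Cmul c (e22 A)).
Definition Mmul (A B : M2) : M2 :=
  mkM2 (Cadd (Cmul (e11 A) (e11 B)) (Cmul (e12 A) (e21 B)))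
       (Cadd (Cmul (e11 A) (e12 B)) (Cmul (e12 A) (e22 B)))
       (Cadd (Cmul (e21 A) (e11 B)) (Cmul (e22 A) (e21 B)))
       (Cadd (Cmul (e21 A) (e12 B)) (Cmul (e22 A) (e22 B))).
Definition Mconj (A : M2) : M2 :=
  mkM2 (Cconj (e11 A)) (Cconj (e12 A)) (Cconj (e21 A)) (Cconj (e22 A)).
Fixpoint Mpow (A : M2) (n : nat) : M2 :=
  match n with O => Mid | S m => Mmul A (Mpow A m) end.
Definition MV (A : M2) (v : V2) : V2 :=
  mkV2 (Cadd (Cmul (e11 A) (v1 v)) (Cmul (e12 A) (v2 v)))
       (Cadd (Cmul (e21 A) (v1 v)) (Cmul (e22 A) (v2 v))).
Definition Vconj (v : V2) : V2 := mkV2 (Cconj (v1 v)) (Cconj (v2 v)).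
(* u^T v (bilinear, no conjugation) *)
Definition VdotT (u v : V2) : Cx := Cadd (Cmul (v1 u) (v1 v)) (Cmul (v2 u) (v2 v)).
Definition outer (u v : V2) : M2 :=
  mkM2 (Cmul (v1 u) (v1 v)) (Cmul (v1 u) (v2 v))
       (Cmul (v2 u) (v1 v)) (Cmul (v2 u) (v2 v)).

Definition sigma2 : M2 := mkM2 Czero (Cneg Ci) Ci Czero.

Definition c_inf (odd : bool) : V2 :=
  if odd then mkV2 Cone (Cneg Cone) else mkV2 Cone Cone.

Definition Yinf (s s' : V2) : M2 :=
  let N := VdotT (Vconj s) s in
  let w := VdotT s (MV sigma2 s') in
  Mscale (Cinv (Cadd (Cmul (RtoC 4) (RtoC (Cnorm2 w))) (Cmul N N)))
    (Madd (Mscale (Cmul (Cneg (RtoC 4)) (Cconj w)) (Mmul (outer s s) sigma2))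
          (Mscale (Cmul (Cmul (RtoC 2) Ci) N)
                  (Mmul (Mmul sigma2 (outer (Vconj s) s)) sigma2))).

Definition Zinf (Y : M2) : M2 := Mmul (Mmul sigma2 (Mconj Y)) sigma2.

Definition Gmat (Y : M2) (lam : Cx) : M2 :=
  Madd Mid (Madd (Mscale (Cinv (Csub lam Ci)) Y)
                 (Mscale (Cinv (Cadd lam Ci)) (Zinf Y))).

Definition Cderiv_R (f : R -> Cx) (x : R) (l : Cx) : Prop :=
  derivable_pt_lim (fun y => Re (f y)) x (Re l) /\
  derivable_pt_lim (fun y => Im (f y)) x (Im l).
Definition Mderiv_R (f : R -> M2) (x : R) (L : M2) : Prop :=
  Cderiv_R (fun y => e11 (f y)) x (e11 L) /\ Cderiv_R (fun y => e12 (f y)) x (e12 L) /\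
  Cderiv_R (fun y => e21 (f y)) x (e21 L) /\ Cderiv_R (fun y => e22 (f y)) x (e22 L).
Definition Cderiv_C (f : Cx -> Cx) (z l : Cx) : Prop :=
  forall eps, 0 < eps -> exists delta, 0 < delta /\
    forall h, h <> Czero -> Cmod h < delta ->
      Cmod (Csub (Cdiv (Csub (f (Cadd z h)) (f z)) h) l) < eps.
Definition Mderiv_C (f : Cx -> M2) (z : Cx) (L : M2) : Prop :=
  Cderiv_C (fun y => e11 (f y)) z (e11 L) /\ Cderiv_C (fun y => e12 (f y)) z (e12 L) /\
  Cderiv_C (fun y => e21 (f y)) z (e21 L) /\ Cderiv_C (fun y => e22 (f y)) z (e22 L).
Definition Ccont2 (f : R -> R -> Cx) : Prop :=
  forall x t eps, 0 < eps -> exists delta, 0 < delta /\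
    forall x' t', Rabs (x' - x) < delta -> Rabs (t' - t) < delta ->
      Cmod (Csub (f x' t') (f x t)) < eps.

Definition NLS_classical (psi psix psixx psit : R -> R -> Cx) : Prop :=
  (forall x t, Cderiv_R (fun y => psi y t) x (psix x t)) /\
  (forall x t, Cderiv_R (fun y => psix y t) x (psixx x t)) /\
  (forall x t, Cderiv_R (fun s => psi x s) t (psit x t)) /\
  Ccont2 psi /\ Ccont2 psix /\ Ccont2 psixx /\ Ccont2 psit /\
  (forall x t,
     Cadd (Cadd (Cmul Ci (psit x t)) (Cmul (RtoC (1/2)) (psixx x t)))
          (Cmul (RtoC (Cnorm2 (psi x t) - 1)) (psi x t)) = Czero).

Definition LaxX (psi : R -> R -> Cx) (lam : Cx) (x t : R) : M2 :=
  mkM2 (Cneg (Cmul Ci lam)) (psi x t) (Cneg (Cconj (psi x t))) (Cmul Ci lam).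

Definition LaxT (psi psix : R -> R -> Cx) (lam : Cx) (x t : R) : M2 :=
  let q := Cmul (Cmul (RtoC (1/2)) Ci) (RtoC (Cnorm2 (psi x t) - 1)) in
  mkM2 (Cadd (Cneg (Cmul Ci (Cmul lam lam))) q)
       (Cadd (Cmul lam (psi x t)) (Cmul (Cmul (RtoC (1/2)) Ci) (psix x t)))
       (Cadd (Cneg (Cmul lam (Cconj (psi x t))))
             (Cmul (Cmul (RtoC (1/2)) Ci) (Cconj (psix x t))))
       (Csub (Cmul Ci (Cmul lam lam)) q).

Definition FundSol (psi psix : R -> R -> Cx) (U : Cx -> R -> R -> M2) : Prop :=
  (forall lam x t, Mderiv_R (fun y => U lam y t) x (Mmul (LaxX psi lam x t) (U lam x t))) /\
  (forall lam x t, Mderiv_R (fun s => U lam x s) t (Mmul (LaxT psi psix lam x t) (U lam x t))) /\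
  (forall lam, U lam 0 0 = Mid).

(** Y^[n]_inf(x,t) and G^[n](lam;x,t), given U^[n] and dU^[n] = d_lam U^[n](i;.,.) *)
Definition Yn (odd : bool) (U : nat -> Cx -> R -> R -> M2) (dU : nat -> R -> R -> M2)
  (n : nat) (x t : R) : M2 :=
  Yinf (MV (U n Ci x t) (c_inf odd)) (MV (dU n x t) (c_inf odd)).

Definition Gn (odd : bool) (U : nat -> Cx -> R -> R -> M2) (dU : nat -> R -> R -> M2)
  (n : nat) (lam : Cx) (x t : R) : M2 :=
  Gmat (Yn odd U dU n x t) lam.

Fixpoint prodG (odd : bool) (U : nat -> Cx -> R -> R -> M2) (dU : nat -> R -> R -> M2)
  (m : nat) (lam : Cx) (x t : R) : M2 :=
  match m with
  | O => Mid
  | S k => Mmul (Gn odd U dU k lam x t) (prodG odd U dU k lam x t)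
  end.

Definition Hm : M2 := Mscale Ci (mkM2 Cone Cone Cone Cone).
Definition Km : M2 := Mscale Ci (mkM2 Cone (Cneg Cone) (Cneg Cone) Cone).

Definition Amat (odd : bool) : M2 := if odd then Hm else Km.
Definition Bmat (odd : bool) : M2 := if odd then Km else Hm.

Definition G0formula (odd : bool) (lam : Cx) : M2 :=
  Madd Mid (Madd (Mscale (Cinv (Csub lam Ci)) (Amat odd))
                 (Mscale (Cneg (Cinv (Cadd lam Ci))) (Bmat odd))).

Fixpoint Msum1 (f : nat -> M2) (m : nat) : M2 :=
  match m with
  | O => Mscale Czero Mid
  | S k => Madd (Msum1 f k) (f (S k))
  end.

Definition Gpowformula (odd : bool) (n : nat) (lam : Cx) : M2 :=
  Madd Mid (Msum1 (fun k =>
    Mscale (Cmul (RtoC (Binomial.C n k)) (Cpow (Cmul (RtoC 2) Ci) (k - 1)))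
      (Madd (Mscale (Cinv (Cpow (Csub lam Ci) k)) (Amat odd))
            (Mscale (Cmul (Cpow (Cneg Cone) k) (Cinv (Cpow (Cadd lam Ci) k))) (Bmat odd))))
    n).

(* At (x,t) = (0,0) every fundamental solution is the identity for all lambda, so its
   lambda-derivative vanishes there and every Darboux step produces the same residue
   Y = H (resp. K); hence G^[n](lambda;0,0) = G^[0](lambda;0,0) for all n and the
   product is a power.  Since Z = -K (resp. -H) and H/(2i), K/(2i) are complementary
   orthogonal idempotents, I + aH + bK = (1+2ia) H/(2i) + (1+2ib) K/(2i), whose n-th
   power is read off by the binomial theorem. *)
From Stdlib Require Import Reals Lra Lia.
Open Scope R_scope.

Lemma Cx_ext z w : Re z = Re w -> Im z = Im w -> z = w.
Proof. destruct z, w; simpl; intros; subst; reflexivity. Qed.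

Lemma Cx_ring : ring_theory Czero Cone Cadd Cmul Csub Cneg (@eq Cx).
Proof. constructor; intros; apply Cx_ext; simpl; ring. Qed.
Add Ring Cx_ring : Cx_ring.

Lemma M2_ext A B :
  e11 A = e11 B -> e12 A = e12 B -> e21 A = e21 B -> e22 A = e22 B -> A = B.
Proof. destruct A, B; simpl; intros; subst; reflexivity. Qed.

Definition Mzero : M2 := mkM2 Czero Czero Czero Czero.
Definition two_i : Cx := Cmul (RtoC 2) Ci.

Lemma Cpow_mul z w k : Cpow (Cmul z w) k = Cmul (Cpow z k) (Cpow w k).
Proof. induction k as [|k IH]; cbn [Cpow]; [|rewrite IH]; ring. Qed.

Lemma Cinv_mul z w : Cinv (Cmul z w) = Cmul (Cinv z) (Cinv w).
Proof.
  destruct z as [a b], w as [c d]; unfold Cinv, Cnorm2; simpl.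
  replace ((a * c - b * d) * (a * c - b * d) + (a * d + b * c) * (a * d + b * c))
    with ((a * a + b * b) * (c * c + d * d)) by ring.
  unfold Rdiv; rewrite Rinv_mult; apply Cx_ext; simpl; ring.
Qed.

Lemma Cinv_pow z k : Cinv (Cpow z k) = Cpow (Cinv z) k.
Proof.
  induction k as [|k IH]; cbn [Cpow].
  - apply Cx_ext; unfold Cinv, Cnorm2; simpl; field.
  - rewrite Cinv_mul, IH; reflexivity.
Qed.

Lemma Cmod_small_eq0 z : (forall eps, 0 < eps -> Cmod z < eps) -> z = Czero.
Proof.
  intros Hsmall.
  assert (Hnorm : Cnorm2 z = 0).
  { destruct (Rle_lt_dec (Cmod z) 0) as [Hle|Hlt].
    - apply sqrt_eq_0; [unfold Cnorm2; nra|].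
      pose proof (sqrt_pos (Cnorm2 z)); unfold Cmod in Hle; lra.
    - specialize (Hsmall _ Hlt); lra. }
  destruct z as [a b]; unfold Cnorm2 in Hnorm; simpl in Hnorm.
  apply Cx_ext; simpl; nra.
Qed.

Lemma Cderiv_C_const (f : Cx -> Cx) c z l :
  (forall y, f y = c) -> Cderiv_C f z l -> l = Czero.
Proof.
  intros Hf Hd; apply Cmod_small_eq0; intros eps Heps.
  destruct (Hd eps Heps) as [delta [Hdelta Hquot]].
  set (h := RtoC (delta / 2)).
  assert (Hh0 : h <> Czero).
  { intros E; apply (f_equal Re) in E; simpl in E; lra. }
  assert (Hhd : Cmod h < delta).
  { unfold Cmod, Cnorm2; simpl.
    replace (delta / 2 * (delta / 2) + 0 * 0) with (Rsqr (delta / 2)) by (unfold Rsqr; ring).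
    rewrite sqrt_Rsqr; lra. }
  specialize (Hquot h Hh0 Hhd); rewrite !Hf in Hquot.
  replace (Cmod l) with (Cmod (Csub (Cdiv (Csub c c) h) l)); [exact Hquot|].
  unfold Cmod, Cnorm2, Cdiv, Cinv; destruct c, l; simpl; f_equal; ring.
Qed.

Lemma Mderiv_C_const (F : Cx -> M2) C z L :
  (forall y, F y = C) -> Mderiv_C F z L -> L = Mzero.
Proof.
  intros HF [H11 [H12 [H21 H22]]].
  apply M2_ext; simpl; eapply Cderiv_C_const; eauto; intros y; simpl; rewrite HF; reflexivity.
Qed.

Fixpoint Csum1 (f : nat -> Cx) (m : nat) : Cx :=
  match m with O => Czero | S k => Cadd (Csum1 f k) (f (S k)) end.

Lemma Csum1_ext f g m :
  (forall k, (1 <= k <= m)%nat -> f k = g k) -> Csum1 f m = Csum1 g m.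
Proof.
  induction m as [|m IH]; intros Hfg; simpl; [reflexivity|].
  rewrite IH, Hfg; [reflexivity | lia | intros k Hk; apply Hfg; lia].
Qed.

Lemma Csum1_add f g m :
  Csum1 (fun k => Cadd (f k) (g k)) m = Cadd (Csum1 f m) (Csum1 g m).
Proof. induction m as [|m IH]; simpl; [|rewrite IH]; ring. Qed.

Lemma Csum1_scal c f m : Csum1 (fun k => Cmul c (f k)) m = Cmul c (Csum1 f m).
Proof. induction m as [|m IH]; simpl; [|rewrite IH]; ring. Qed.

Lemma Csum1_shift f m : Csum1 (fun k => f (pred k)) (S m) = Cadd (f O) (Csum1 f m).
Proof. induction m as [|m IH]; [simpl; ring|]. cbn [Csum1 pred] in *; rewrite IH; ring. Qed.

Lemma Msum1_decomp (A B : M2) c u v m :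
  Msum1 (fun k => Mscale (c k) (Madd (Mscale (u k) A) (Mscale (v k) B))) m
  = Madd (Mscale (Csum1 (fun k => Cmul (c k) (u k)) m) A)
         (Mscale (Csum1 (fun k => Cmul (c k) (v k)) m) B).
Proof.
  induction m as [|m IH]; cbn [Msum1 Csum1]; [|rewrite IH];
    apply M2_ext; cbn [e11 e12 e21 e22 Madd Mscale Mid]; ring.
Qed.

Lemma binomial_C_nn n : Binomial.C n n = 1.
Proof. unfold Binomial.C; rewrite Nat.sub_diag; simpl; field; apply INR_fact_neq_0. Qed.

Lemma binomial_C_n0 n : Binomial.C n 0 = 1.
Proof. unfold Binomial.C; rewrite Nat.sub_0_r; simpl; field; apply INR_fact_neq_0. Qed.

Lemma binomial_Cpow n x :
  Cpow (Cadd Cone x) n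
  = Cadd Cone (Csum1 (fun k => Cmul (RtoC (Binomial.C n k)) (Cpow x k)) n).
Proof.
  induction n as [|n IH]; [simpl; ring|].
  set (g := fun k => Cmul (RtoC (Binomial.C n k)) (Cpow x k)).
  fold g in IH.
  cbn [Cpow Csum1]; rewrite IH.
  (* Pascal's rule only for k <= n: [Binomial.C n (S n)] is not 0, so the top term stays apart. *)
  rewrite (Csum1_ext (fun k => Cmul (RtoC (Binomial.C (S n) k)) (Cpow x k))
                     (fun k => Cadd (g k) (Cmul x (g (pred k))))).
  2:{ intros [|j] Hk; [lia|].
      unfold g; simpl pred; rewrite <- Binomial.pascal by apply Hk.
      apply Cx_ext; simpl; ring. }
  rewrite Csum1_add, Csum1_scal.
  pose proof (Csum1_shift g n) as Hshift; cbn [Csum1 pred] in Hshift.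
  assert (Hg0 : g O = Cone) by (unfold g; rewrite binomial_C_n0; apply Cx_ext; simpl; ring).
  assert (Hgn : g n = Cpow x n) by (unfold g; rewrite binomial_C_nn; apply Cx_ext; simpl; ring).
  rewrite Hg0, Hgn in Hshift; rewrite binomial_C_nn.
  replace (Csum1 (fun k => g (pred k)) n) with (Cadd (Cadd Cone (Csum1 g n)) (Cneg (Cpow x n)))
    by (rewrite <- Hshift; ring).
  apply Cx_ext; simpl; ring.
Qed.

Lemma Mmul_combination (P Q : M2) a b c d :
  Mmul (Madd (Mscale a P) (Mscale b Q)) (Madd (Mscale c P) (Mscale d Q))
  = Madd (Madd (Mscale (Cmul a c) (Mmul P P)) (Mscale (Cmul a d) (Mmul P Q)))
         (Madd (Mscale (Cmul b c) (Mmul Q P)) (Mscale (Cmul b d) (Mmul Q Q))).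
Proof. apply M2_ext; simpl; ring. Qed.

Lemma Mpow_spectral (P Q : M2) a b n :
  Mmul P P = P -> Mmul Q Q = Q -> Mmul P Q = Mzero -> Mmul Q P = Mzero ->
  Madd P Q = Mid ->
  Mpow (Madd (Mscale a P) (Mscale b Q)) n = Madd (Mscale (Cpow a n) P) (Mscale (Cpow b n) Q).
Proof.
  intros HPP HQQ HPQ HQP HPQid; induction n as [|n IH]; cbn [Mpow Cpow].
  - rewrite <- HPQid; apply M2_ext; simpl; ring.
  - rewrite IH, Mmul_combination, HPP, HQQ, HPQ, HQP; apply M2_ext; simpl; ring.
Qed.

Definition half : Cx := RtoC (1 / 2).

(* [Aproj odd] and [Bproj odd] are [Amat odd / 2i] and [Bmat odd / 2i]. *)
Definition Aproj (odd : bool) : M2 :=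
  if odd then mkM2 half half half half else mkM2 half (Cneg half) (Cneg half) half.
Definition Bproj (odd : bool) : M2 :=
  if odd then mkM2 half (Cneg half) (Cneg half) half else mkM2 half half half half.

Lemma Aproj_Bproj_spectral odd :
  Mmul (Aproj odd) (Aproj odd) = Aproj odd /\ Mmul (Bproj odd) (Bproj odd) = Bproj odd /\
  Mmul (Aproj odd) (Bproj odd) = Mzero /\ Mmul (Bproj odd) (Aproj odd) = Mzero /\
  Madd (Aproj odd) (Bproj odd) = Mid.
Proof. destruct odd; repeat split; apply M2_ext; apply Cx_ext; simpl; field. Qed.

Lemma Mid_add_AB_spectral odd a b :
  Madd Mid (Madd (Mscale a (Amat odd)) (Mscale b (Bmat odd)))
  = Madd (Mscale (Cadd Cone (Cmul two_i a)) (Aproj odd))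
         (Mscale (Cadd Cone (Cmul two_i b)) (Bproj odd)).
Proof. destruct odd, a, b; apply M2_ext; apply Cx_ext; simpl; field. Qed.

Definition binom_tail (n : nat) (x : Cx) : Cx :=
  Csum1 (fun k => Cmul (Cmul (RtoC (Binomial.C n k)) (Cpow two_i (k - 1))) (Cpow x k)) n.

Lemma binom_tail_spec n x :
  Cadd Cone (Cmul two_i (binom_tail n x)) = Cpow (Cadd Cone (Cmul two_i x)) n.
Proof.
  rewrite binomial_Cpow; unfold binom_tail; rewrite <- Csum1_scal; f_equal.
  apply Csum1_ext; intros [|j] Hk; [lia|].
  rewrite Cpow_mul; cbn [Cpow]; replace (S j - 1)%nat with j by lia; ring.
Qed.

Lemma Mpow_Mid_add_AB odd a b n :
  Mpow (Madd Mid (Madd (Mscale a (Amat odd)) (Mscale b (Bmat odd)))) n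
  = Madd Mid (Madd (Mscale (binom_tail n a) (Amat odd)) (Mscale (binom_tail n b) (Bmat odd))).
Proof.
  destruct (Aproj_Bproj_spectral odd) as [HAA [HBB [HAB [HBA HABid]]]].
  rewrite !Mid_add_AB_spectral, Mpow_spectral by assumption.
  rewrite !binom_tail_spec; reflexivity.
Qed.

Lemma Gpowformula_binom_tail odd n lam :
  Gpowformula odd n lam
  = Madd Mid (Madd (Mscale (binom_tail n (Cinv (Csub lam Ci))) (Amat odd))
                   (Mscale (binom_tail n (Cneg (Cinv (Cadd lam Ci)))) (Bmat odd))).
Proof.
  unfold Gpowformula; rewrite Msum1_decomp; unfold binom_tail, two_i.
  f_equal; f_equal; f_equal; apply Csum1_ext; intros k _; rewrite Cinv_pow.
  - reflexivity.
  - replace (Cneg (Cinv (Cadd lam Ci))) with (Cmul (Cneg Cone) (Cinv (Cadd lam Ci))) by ring.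
    rewrite (Cpow_mul (Cneg Cone)); reflexivity.
Qed.

Lemma Yinf_origin odd : Yinf (MV Mid (c_inf odd)) (MV Mzero (c_inf odd)) = Amat odd.
Proof.
  assert (HN : VdotT (Vconj (MV Mid (c_inf odd))) (MV Mid (c_inf odd)) = RtoC 2).
  { destruct odd; apply Cx_ext; simpl; ring. }
  assert (Hw : VdotT (MV Mid (c_inf odd)) (MV sigma2 (MV Mzero (c_inf odd))) = Czero).
  { destruct odd; apply Cx_ext; simpl; ring. }
  assert (Hden : Cinv (Cadd (Cmul (RtoC 4) (RtoC (Cnorm2 Czero))) (Cmul (RtoC 2) (RtoC 2)))
                 = RtoC (1 / 4)).
  { apply Cx_ext; unfold Cinv, Cnorm2; simpl; field. }
  unfold Yinf; rewrite HN, Hw, Hden.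
  destruct odd; apply M2_ext; apply Cx_ext; cbn; lra.
Qed.

Lemma Zinf_Amat odd : Zinf (Amat odd) = Mscale (Cneg Cone) (Bmat odd).
Proof. destruct odd; apply M2_ext; apply Cx_ext; simpl; ring. Qed.

Lemma Gmat_Amat odd lam : Gmat (Amat odd) lam = G0formula odd lam.
Proof.
  unfold Gmat, G0formula; rewrite Zinf_Amat.
  destruct (Cinv (Csub lam Ci)), (Cinv (Cadd lam Ci)), odd;
    apply M2_ext; apply Cx_ext; simpl; ring.
Qed.

Lemma Yn_origin odd U dU k :
  (forall lam, U k lam 0 0 = Mid) -> Mderiv_C (fun lam => U k lam 0 0) Ci (dU k 0 0) ->
  Yn odd U dU k 0 0 = Amat odd.
Proof.
  intros HU HdU; unfold Yn; rewrite HU, (Mderiv_C_const _ _ _ _ HU HdU).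
  apply Yinf_origin.
Qed.

Lemma prodG_const odd U dU lam x t G n :
  (forall k, Gn odd U dU k lam x t = G) -> prodG odd U dU n lam x t = Mpow G n.
Proof. intros HG; induction n as [|n IH]; cbn [prodG Mpow]; [|rewrite IH, HG]; reflexivity. Qed.

Theorem mainTheorem11 (odd : bool)
  (psi psix psixx psit : nat -> R -> R -> Cx)
  (U : nat -> Cx -> R -> R -> M2) (dU : nat -> R -> R -> M2) :
  (forall x t, psi O x t = Cone) ->
  (forall n, NLS_classical (psi n) (psix n) (psixx n) (psit n)) ->
  (forall n, FundSol (psi n) (psix n) (U n)) ->
  (forall n x t, Mderiv_C (fun lam => U n lam x t) Ci (dU n x t)) ->
  (forall n x t,
     psi (S n) x t =
     Cadd (psi n x t)
          (Cmul (Cmul (RtoC 2) Ci)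
                (Csub (e12 (Yn odd U dU n x t)) (Cconj (e21 (Yn odd U dU n x t)))))) ->
  forall (n : nat) (lam : Cx), (1 <= n)%nat -> lam <> Ci -> lam <> Cneg Ci ->
    prodG odd U dU n lam 0 0 = Mpow (Gn odd U dU O lam 0 0) n /\
      Gn odd U dU O lam 0 0 = G0formula odd lam /\
      Mpow (Gn odd U dU O lam 0 0) n = Gpowformula odd n lam.
Proof.
  intros _ _ HFund HdU _ n lam _ _ _.
  assert (HG : forall k, Gn odd U dU k lam 0 0 = G0formula odd lam).
  { intros k; destruct (HFund k) as [_ [_ HU]].
    unfold Gn; rewrite (Yn_origin odd U dU k HU (HdU k 0 0)); apply Gmat_Amat. }
  rewrite HG; split; [|split].
  - apply prodG_const, HG.
  - reflexivity.
  - unfold G0formula; rewrite Mpow_Mid_add_AB, Gpowformula_binom_tail; reflexivity.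
Qed.
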